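(* For the qudit unitaries $I=\sum_{i=0}^{d-1}|i\rangle\langle i|$ and $V=|0\rangle\langle 0|-\sum_{i=1}^{d-1}|i\rangle\langle i|$, the corresponding unitary channels are perfectly distinguishable with an unentangled input state (e.g. $|+\rangle=(|0\rangle+|1\rangle)/\sqrt2$) for every $d$, whereas with a maximally entangled input state the optimal success probability $\tfrac12\big[1+\sqrt{1-(1-2/d)^2}\big]$ tends to $\tfrac12$ (random guessing) as $d\to\infty$.
   Context: Single-shot discrimination of two unitary channels $\rho\mapsto U\rho U^\dagger$ with uniform priors; an input state (possibly entangled with an ancilla) is prepared, one use of the unknown channel is applied, and an optimal measurement is performed. *)

From HB Require Import structures.
From mathcomp Require Import all_boot all_order all_algebra.
From mathcomp Require Import complex mxtens.
From mathcomp Require Import all_classical all_reals all_analysis.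
Set Implicit Arguments.
Unset Strict Implicit.
Unset Printing Implicit Defensive.
Import Order.TTheory GRing.Theory Num.Theory.
Local Open Scope ring_scope.

Section Qudit.
Variable R : realType.
Local Notation C := (R[i]).

Definition toC (x : R) : C := Complex x 0.

Definition adj {m n : nat} (A : 'M[C]_(m, n)) : 'M[C]_(n, m) :=
  (map_mx (fun z : C => z^*) A)^T.

(* computational basis ket |i> of C^n (zero vector if i >= n) *)
Definition ket (n i : nat) : 'cV[C]_n := \col_(j < n) ((j : nat) == i)%:R.

Definition pure_state {n : nat} (psi : 'cV[C]_n) : Prop :=
  (adj psi *m psi) 0 0 = 1.

Definition psd {n : nat} (A : 'M[C]_n) : Prop :=
  adj A = A /\ forall v : 'cV[C]_n, 0 <= (adj v *m A *m v) 0 0.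

Definition povm2 {n : nat} (E0 E1 : 'M[C]_n) : Prop :=
  psd E0 /\ psd E1 /\ E0 + E1 = 1%:M.

Definition out_state {d k : nat} (U : 'M[C]_d) (psi : 'cV[C]_(d * k))
  : 'M[C]_(d * k) :=
  let W := U *t (1%:M : 'M[C]_k) in W *m (psi *m adj psi) *m adj W.

(* success probability with uniform priors: outcome 0 -> guess U0,
   outcome 1 -> guess U1 *)
Definition succ_prob {d k : nat} (U0 U1 : 'M[C]_d) (psi : 'cV[C]_(d * k))
  (E0 E1 : 'M[C]_(d * k)) : C :=
  2^-1 * (\tr (E0 *m out_state U0 psi) + \tr (E1 *m out_state U1 psi)).

Definition opt_succ_prob {d k : nat} (U0 U1 : 'M[C]_d)
  (psi : 'cV[C]_(d * k)) (p : C) : Prop :=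
  (exists E0 E1 : 'M[C]_(d * k), povm2 E0 E1 /\ succ_prob U0 U1 psi E0 E1 = p)
  /\ (forall E0 E1 : 'M[C]_(d * k), povm2 E0 E1 ->
        succ_prob U0 U1 psi E0 E1 <= p).

Definition perfectly_distinguishable {d k : nat} (U0 U1 : 'M[C]_d)
  (psi : 'cV[C]_(d * k)) : Prop :=
  exists E0 E1 : 'M[C]_(d * k), povm2 E0 E1 /\ succ_prob U0 U1 psi E0 E1 = 1.

Definition Iq (d : nat) : 'M[C]_d := \sum_(0 <= i < d) ket d i *m adj (ket d i).
Definition Vq (d : nat) : 'M[C]_d :=
  ket d 0 *m adj (ket d 0) - \sum_(1 <= i < d) ket d i *m adj (ket d i).

Definition plus_state (d : nat) : 'cV[C]_d :=
  (toC (Num.sqrt 2))^-1 *: (ket d 0 + ket d 1).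

Definition max_ent (d : nat) : 'cV[C]_(d * d) :=
  (toC (Num.sqrt d%:R))^-1 *: \sum_(0 <= i < d) (ket d i *t ket d i).

Definition ent_opt (d : nat) : R :=
  2^-1 * (1 + Num.sqrt (1 - (1 - 2 / d%:R) ^+ 2)).

End Qudit.

(* Both inputs turn the two channels into a pair of pure states
   x0 = sqrt p a + sqrt (1 - p) b and x1 = sqrt p a - sqrt (1 - p) b with a, b
   orthonormal.  For such a pair the contrast <x0|E|x0> - <x1|E|x1> equals, by
   polarization, sqrt (p (1 - p)) (<a+b|E|a+b> - <a-b|E|a-b>), which is at most
   2 sqrt (p (1 - p)) whenever 0 <= E <= 1, with equality for the projection on
   (a + b)/sqrt 2: this is Helstrom's optimal success probability
   (1 + sqrt (1 - (1 - 2p)^2))/2.  Since V fixes |0> and negates every other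
   basis vector, the input |+>|0> gives p = 1/2 (certainty) while the maximally
   entangled input gives p = 1/d, whose success probability tends to 1/2. *)
From HB Require Import structures.
From mathcomp Require Import all_boot all_order all_algebra.
From mathcomp Require Import complex mxtens.
From mathcomp Require Import all_classical all_reals all_analysis.
From mathcomp Require Import ring.
Import Order.TTheory GRing.Theory Num.Theory.
Import numFieldNormedType.Exports.
Local Open Scope classical_set_scope.
Local Open Scope ring_scope.
Set Implicit Arguments.
Unset Strict Implicit.
Unset Printing Implicit Defensive.

Section Qudit.
Variable R : realType.
Local Notation C := R[i].

HB.instance Definition _ := GRing.RMorphism.copy (@toC R) (real_complex R).

Lemma conj_toC (x : R) : (toC x)^* = toC x.
Proof. by apply/conj_Creal; rewrite /toC complex_real. Qed.

Lemma adjM m n p (A : 'M[C]_(m, n)) (B : 'M[C]_(n, p)) :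
  adj (A *m B) = adj B *m adj A.
Proof.
apply/matrixP=> i j; rewrite !mxE rmorph_sum; apply: eq_bigr=> k _.
by rewrite !mxE rmorphM mulrC.
Qed.

Lemma adjD m n (A B : 'M[C]_(m, n)) : adj (A + B) = adj A + adj B.
Proof. by apply/matrixP=> i j; rewrite !mxE rmorphD. Qed.

Lemma adjN m n (A : 'M[C]_(m, n)) : adj (- A) = - adj A.
Proof. by apply/matrixP=> i j; rewrite !mxE rmorphN. Qed.

Lemma adjZ m n c (A : 'M[C]_(m, n)) : adj (c *: A) = c^* *: adj A.
Proof. by apply/matrixP=> i j; rewrite !mxE rmorphM. Qed.

Lemma adjK m n (A : 'M[C]_(m, n)) : adj (adj A) = A.
Proof. by apply/matrixP=> i j; rewrite !mxE conjCK. Qed.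

Lemma adj1 n : adj (1%:M : 'M[C]_n) = 1%:M.
Proof. by apply/matrixP=> i j; rewrite !mxE rmorphMn rmorph1 eq_sym. Qed.

Lemma adj_sum m n (I : Type) (r : seq I) (P : pred I) (F : I -> 'M[C]_(m, n)) :
  adj (\sum_(i <- r | P i) F i) = \sum_(i <- r | P i) adj (F i).
Proof.
apply/matrixP=> i j; rewrite !mxE !summxE rmorph_sum.
by apply: eq_bigr=> k _; rewrite !mxE.
Qed.

Definition cdot n (x y : 'cV[C]_n) : C := (adj x *m y) 0 0.

Lemma cdotE n (x y : 'cV[C]_n) : cdot x y = \sum_k (x k 0)^* * y k 0.
Proof. by rewrite /cdot mxE; apply: eq_bigr=> k _; rewrite !mxE. Qed.

Lemma cdot_ge0 n (x : 'cV[C]_n) : 0 <= cdot x x.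
Proof. by rewrite cdotE; apply: sumr_ge0=> k _; rewrite mulrC mul_conjC_ge0. Qed.

Lemma cdotC n (x y : 'cV[C]_n) : cdot y x = (cdot x y)^*.
Proof.
rewrite !cdotE rmorph_sum; apply: eq_bigr=> k _.
by rewrite rmorphM /= conjCK mulrC.
Qed.

Lemma cdotDl n (x y z : 'cV[C]_n) : cdot (x + y) z = cdot x z + cdot y z.
Proof. by rewrite /cdot adjD mulmxDl mxE. Qed.

Lemma cdotDr n (x y z : 'cV[C]_n) : cdot z (x + y) = cdot z x + cdot z y.
Proof. by rewrite /cdot mulmxDr mxE. Qed.

Lemma cdotNl n (x z : 'cV[C]_n) : cdot (- x) z = - cdot x z.
Proof. by rewrite /cdot adjN mulNmx mxE. Qed.

Lemma cdotNr n (x z : 'cV[C]_n) : cdot z (- x) = - cdot z x.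
Proof. by rewrite /cdot mulmxN mxE. Qed.

Lemma cdotZl n c (x z : 'cV[C]_n) : cdot (c *: x) z = c^* * cdot x z.
Proof. by rewrite /cdot adjZ -scalemxAl mxE. Qed.

Lemma cdotZr n c (x z : 'cV[C]_n) : cdot z (c *: x) = c * cdot z x.
Proof. by rewrite /cdot -scalemxAr mxE. Qed.

Lemma cdot_suml n (I : Type) (r : seq I) (P : pred I) (F : I -> 'cV[C]_n) z :
  cdot (\sum_(i <- r | P i) F i) z = \sum_(i <- r | P i) cdot (F i) z.
Proof. by rewrite /cdot adj_sum mulmx_suml summxE. Qed.

Lemma cdot_sumr n (I : Type) (r : seq I) (P : pred I) (F : I -> 'cV[C]_n) z :
  cdot z (\sum_(i <- r | P i) F i) = \sum_(i <- r | P i) cdot z (F i).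
Proof. by rewrite /cdot mulmx_sumr summxE. Qed.

Lemma cdot_tens m n (a c : 'cV[C]_m) (b e : 'cV[C]_n) :
  cdot (a *t b) (c *t e) = cdot a c * cdot b e.
Proof.
rewrite !cdotE mulr_sum; apply: eq_bigr => k _; rewrite !mxE.
have -> : mxtens_unindex (0 : 'I_(1 * 1)) = (0, 0).
  by case: mxtens_unindex => i j; rewrite !ord1.
by rewrite rmorphM /= mulrACA.
Qed.

Lemma cdot_ket d i j : (i < d)%N -> cdot (ket R d i) (ket R d j) = (i == j)%:R.
Proof.
move=> ltid; rewrite cdotE (bigD1 (Ordinal ltid)) //= big1 ?addr0 => [|k neki].
  by rewrite !mxE eqxx conjC1 mul1r.
have /negbTE neki' : (k : nat) != i by apply: contra neki => /eqP eqki; apply/eqP/val_inj.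
by rewrite !mxE neki' conjC0 mul0r.
Qed.

Lemma adj_mul_cV n (u x : 'cV[C]_n) : adj u *m x = (cdot u x)%:M.
Proof. exact: mx11_scalar. Qed.

Definition ketbra n (u : 'cV[C]_n) : 'M[C]_n := u *m adj u.

Lemma ketbra_mul n (u x : 'cV[C]_n) : ketbra u *m x = cdot u x *: u.
Proof. by rewrite /ketbra -mulmxA adj_mul_cV mul_mx_scalar. Qed.

Lemma toC_ge0 (x : R) : (0 <= toC x) = (0 <= x).
Proof. by rewrite -lecR. Qed.

Lemma psd_proj n (P : 'M[C]_n) : adj P = P -> P *m P = P -> psd P.
Proof.
move=> adjP idemP; split=> // v.
have -> : adj v *m P *m v = adj (P *m v) *m (P *m v).
  by rewrite adjM adjP mulmxA -(mulmxA _ P P) idemP.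
exact: cdot_ge0.
Qed.

Lemma psd_cdot n (E : 'M[C]_n) v : psd E -> 0 <= cdot v (E *m v).
Proof. by case=> _ /(_ v); rewrite /cdot mulmxA. Qed.

Lemma povm2_compl n (E0 E1 : 'M[C]_n) : povm2 E0 E1 -> E1 = 1%:M - E0.
Proof. by case=> _ [_ <-]; rewrite addrC addKr. Qed.

Lemma povm2_ketbra n (c : R) (u : 'cV[C]_n) : toC c * cdot u u = 1 ->
  povm2 (toC c *: ketbra u) (1%:M - toC c *: ketbra u).
Proof.
move=> unit_cu; set P := toC c *: ketbra u.
have adjP : adj P = P by rewrite adjZ adjM adjK conj_toC.
have idemP : P *m P = P.
  rewrite -scalemxAl -scalemxAr {2}/ketbra mulmxA ketbra_mul -scalemxAl !scalerA.
  by rewrite unit_cu mulr1.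
split; last split; first exact: psd_proj.
- apply: psd_proj; first by rewrite adjD adjN adj1 adjP.
  by rewrite mulmxBl mul1mx mulmxBr mulmx1 idemP subrr subr0.
- by rewrite addrC subrK.
Qed.

Definition chan_out d k (U : 'M[C]_d) (psi : 'cV[C]_(d * k)) : 'cV[C]_(d * k) :=
  (U *t (1%:M : 'M[C]_k)) *m psi.

Lemma trace_out_state d k (U : 'M[C]_d) psi (E : 'M[C]_(d * k)) :
  \tr (E *m out_state U psi) = cdot (chan_out U psi) (E *m chan_out U psi).
Proof.
rewrite /out_state /chan_out; set W := U *t _.
rewrite -!mulmxA -adjM mulmxA (mulmxA E) mxtrace_mulC.
by rewrite /mxtrace big_ord1 /cdot.
Qed.

Lemma succ_prob_compl d k (U0 U1 : 'M[C]_d) psi (E : 'M[C]_(d * k)) :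
  succ_prob U0 U1 psi E (1%:M - E) =
  2^-1 * (cdot (chan_out U1 psi) (chan_out U1 psi) +
    (cdot (chan_out U0 psi) (E *m chan_out U0 psi) -
     cdot (chan_out U1 psi) (E *m chan_out U1 psi))).
Proof.
by rewrite /succ_prob !trace_out_state mulmxBl mul1mx cdotDr cdotNr addrCA.
Qed.

Definition superpos n (p : R) (a b : 'cV[C]_n) : 'cV[C]_n :=
  toC (Num.sqrt p) *: a + toC (Num.sqrt (1 - p)) *: b.

Lemma cdot_superpos n (p : R) (a b : 'cV[C]_n) :
  0 <= p <= 1 -> cdot a a = 1 -> cdot b b = 1 -> cdot a b = 0 ->
  cdot (superpos p a b) (superpos p a b) = 1.
Proof.
move=> /andP[p_ge0 p_le1] a_unit b_unit ab_orth.
have ba_orth : cdot b a = 0 by rewrite cdotC ab_orth conjC0.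
rewrite !(cdotDl, cdotDr, cdotZl, cdotZr) a_unit b_unit ab_orth ba_orth !conj_toC.
rewrite !mulr0 !mulr1 addr0 add0r -!rmorphM -rmorphD -!expr2 !sqr_sqrtr ?subr_ge0 //.
by rewrite subrKC rmorph1.
Qed.

(* Helstrom's optimal success probability for two pure states of overlap c. *)
Definition helstrom (c : R) : R := 2^-1 * (1 + Num.sqrt (1 - c ^+ 2)).

Lemma helstrom_superpos (p : R) : 0 <= p <= 1 ->
  helstrom (1 - 2 * p) = 2^-1 * (1 + 2 * (Num.sqrt p * Num.sqrt (1 - p))).
Proof.
move=> /andP[p_ge0 p_le1]; rewrite /helstrom.
have -> : 1 - (1 - 2 * p) ^+ 2 = 2 ^+ 2 * (p * (1 - p)) by ring.
by rewrite sqrtrM ?sqrtr_sqr ?ger0_norm ?sqrtrM ?exprn_ge0.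
Qed.

Section SymmetricSuperpositions.
Variables (n : nat) (p : R) (a b : 'cV[C]_n).
Hypotheses (a_unit : cdot a a = 1) (b_unit : cdot b b = 1) (ab_orth : cdot a b = 0).

Let x0 := superpos p a b.
Let x1 := superpos p a (- b).
Let ba_orth : cdot b a = 0. Proof. by rewrite cdotC ab_orth conjC0. Qed.

Lemma cdot_addv_self : cdot (a + b) (a + b) = 2.
Proof. by rewrite !(cdotDl, cdotDr) a_unit b_unit ab_orth ba_orth addr0 add0r. Qed.

Lemma cdot_addv_subv : cdot (a + b) (a - b) = 0.
Proof.
by rewrite !(cdotDl, cdotDr, cdotNr) a_unit b_unit ab_orth ba_orth subr0 sub0r subrr.
Qed.

Lemma superpos_contrast E :
  cdot x0 (E *m x0) - cdot x1 (E *m x1) =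
  toC (Num.sqrt p * Num.sqrt (1 - p)) *
    (cdot (a + b) (E *m (a + b)) - cdot (a - b) (E *m (a - b))).
Proof.
rewrite /x0 /x1 /superpos rmorphM.
rewrite !(mulmxDr, mulmxN, scalerN, cdotDl, cdotDr, cdotNl, cdotNr, cdotZl, cdotZr).
rewrite !conj_toC -!scalemxAr !cdotZr.
ring.
Qed.

Lemma superpos_contrast_le E0 E1 : povm2 E0 E1 ->
  cdot x0 (E0 *m x0) - cdot x1 (E0 *m x1) <=
  toC (2 * (Num.sqrt p * Num.sqrt (1 - p))).
Proof.
move=> povmE; have E1E := povm2_compl povmE; case: povmE => psdE0 [psdE1 _].
have le2 : cdot (a + b) (E0 *m (a + b)) <= 2.
  have := psd_cdot (a + b) psdE1.
  by rewrite E1E mulmxBl mul1mx cdotDr cdotNr cdot_addv_self subr_ge0.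
have ge0 := psd_cdot (a - b) psdE0.
rewrite superpos_contrast [toC (2 * _)]rmorphM rmorph_nat [2 * _]mulrC.
rewrite ler_wpM2l ?toC_ge0 ?mulr_ge0 ?sqrtr_ge0 //.
by apply: le_trans le2; rewrite gerBl.
Qed.

Lemma superpos_contrast_max (E := toC 2^-1 *: ketbra (a + b)) :
  cdot x0 (E *m x0) - cdot x1 (E *m x1) =
  toC (2 * (Num.sqrt p * Num.sqrt (1 - p))).
Proof.
rewrite superpos_contrast /E -!scalemxAl !ketbra_mul !cdotZr.
rewrite cdot_addv_self cdot_addv_subv.
by rewrite mul0r !mulr0 subr0 !rmorphM fmorphV rmorph_nat mulrC mulKf.
Qed.
End SymmetricSuperpositions.

Lemma opt_succ_prob_superpos d k (U0 U1 : 'M[C]_d) (psi : 'cV[C]_(d * k))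
    (p : R) (a b : 'cV[C]_(d * k)) :
  0 <= p <= 1 -> cdot a a = 1 -> cdot b b = 1 -> cdot a b = 0 ->
  chan_out U0 psi = superpos p a b -> chan_out U1 psi = superpos p a (- b) ->
  opt_succ_prob U0 U1 psi (toC (helstrom (1 - 2 * p))).
Proof.
move=> p01 a_unit b_unit ab_orth out0 out1.
have x1_unit : cdot (chan_out U1 psi) (chan_out U1 psi) = 1.
  by rewrite out1 cdot_superpos ?cdotNl ?cdotNr ?opprK ?ab_orth ?oppr0.
rewrite helstrom_superpos // rmorphM fmorphV rmorph_nat rmorphD rmorph1.
split.
  exists (toC 2^-1 *: ketbra (a + b)), (1%:M - toC 2^-1 *: ketbra (a + b)).
  split.
    apply: povm2_ketbra.
    by rewrite cdot_addv_self // fmorphV rmorph_nat mulVf // pnatr_eq0.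
  by rewrite succ_prob_compl x1_unit out0 out1 superpos_contrast_max.
move=> E0 E1 povmE.
rewrite (povm2_compl povmE) succ_prob_compl x1_unit out0 out1.
rewrite ler_wpM2l ?invr_ge0 ?ler0n // lerD2l.
exact: superpos_contrast_le povmE.
Qed.

Lemma tensmxDl m n p q (A B : 'M[C]_(m, n)) (D : 'M[C]_(p, q)) :
  (A + B) *t D = A *t D + B *t D.
Proof. by apply/matrixP=> i j; rewrite !mxE mulrDl. Qed.

Lemma tensmxNl m n p q (A : 'M[C]_(m, n)) (D : 'M[C]_(p, q)) :
  (- A) *t D = - (A *t D).
Proof. by apply/matrixP=> i j; rewrite !mxE mulNr. Qed.

Lemma tensmxZl m n p q c (A : 'M[C]_(m, n)) (D : 'M[C]_(p, q)) :
  (c *: A) *t D = c *: (A *t D).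
Proof. by apply/matrixP=> i j; rewrite !mxE mulrA. Qed.

Lemma superpos_tens m n p (a b : 'cV[C]_m) (c : 'cV[C]_n) :
  superpos p a b *t c = superpos p (a *t c) (b *t c).
Proof. by rewrite tensmxDl !tensmxZl. Qed.

Lemma chan_out_tens d k (U : 'M[C]_d) (v : 'cV[C]_d) (w : 'cV[C]_k) :
  chan_out U (v *t w) = (U *m v) *t w.
Proof. by rewrite -[w in RHS]mul1mx; exact: (tensmx_mul U 1%:M v w). Qed.

Lemma Iq_id d : Iq R d = 1%:M.
Proof.
apply/matrixP=> i j; rewrite /Iq summxE big_mkord (bigD1 i) //= big1 ?addr0.
  by rewrite !mxE big_ord1 !mxE eqxx conjC_nat mul1r eq_sym.
move=> k neki; rewrite !mxE big_ord1 !mxE.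
have /negbTE -> : (i : nat) != k by apply: contra neki => /eqP eqik; apply/eqP/val_inj.
by rewrite mul0r.
Qed.

Lemma Vq_reflection d : (0 < d)%N -> Vq R d = 2%:R *: ketbra (ket R d 0) - 1%:M.
Proof.
move=> d_gt0; rewrite /Vq -(Iq_id d) /Iq (big_ltn d_gt0) /ketbra.
by rewrite scaler_nat mulr2n opprD addrA addrK.
Qed.

Lemma Vq_ket d i : (i < d)%N ->
  Vq R d *m ket R d i = (if i == 0%N then 1 else -1) *: ket R d i.
Proof.
move=> ltid; rewrite Vq_reflection ?(leq_ltn_trans _ ltid) //.
rewrite mulmxBl mul1mx -scalemxAl ketbra_mul cdot_ket ?(leq_ltn_trans _ ltid) //.
case: i ltid => [|i] _ /=; rewrite ?scale1r ?scale0r ?scaleN1r ?scaler0 ?sub0r //.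
by rewrite scaler_nat mulr2n addrK.
Qed.

Lemma helstrom0 : helstrom 0 = 1.
Proof. by rewrite /helstrom expr0n subr0 sqrtr1 -(natrD _ 1 1) mulVf // pnatr_eq0. Qed.

Lemma plus_state_superpos d : plus_state R d = superpos 2^-1 (ket R d 0) (ket R d 1).
Proof.
rewrite /superpos; have -> : 1 - 2^-1 = 2^-1 :> R by rewrite {1}(splitr 1) mul1r addrK.
by rewrite -scalerDr sqrtrV // fmorphV.
Qed.

Lemma perfectly_distinguishable_plus d : (2 <= d)%N ->
  perfectly_distinguishable (Iq R d) (Vq R d) (plus_state R d *t ket R 1 0).
Proof.
move=> d_ge2; set k0 := ket R 1 0.
have ket_unit i : (i < d)%N -> cdot (ket R d i *t k0) (ket R d i *t k0) = 1.
  by move=> ltid; rewrite cdot_tens !cdot_ket // eqxx mulr1.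
have : opt_succ_prob (Iq R d) (Vq R d) (plus_state R d *t k0)
         (toC (helstrom (1 - 2 * 2^-1))).
  apply: (@opt_succ_prob_superpos _ _ _ _ _ _ (ket R d 0 *t k0) (ket R d 1 *t k0)).
  - by rewrite invr_ge0 ler0n invf_le1 ?ler1n.
  - exact: ket_unit (ltnW d_ge2).
  - exact: ket_unit.
  - by rewrite cdot_tens !cdot_ket ?(ltnW d_ge2) // mul0r.
  - by rewrite chan_out_tens Iq_id mul1mx plus_state_superpos superpos_tens.
  rewrite chan_out_tens plus_state_superpos /superpos mulmxDr -!scalemxAr.
  by rewrite !Vq_ket ?(ltnW d_ge2) // scale1r scaleN1r tensmxDl !tensmxZl tensmxNl.
rewrite mulfV ?pnatr_eq0 // subrr helstrom0 rmorph1 => -[[E0 [E1 [povmE succE]]] _].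
by exists E0, E1.
Qed.

Definition ket2 d i : 'cV[C]_(d * d) := ket R d i *t ket R d i.

Lemma cdot_ket2_sum d i m n : (i < d)%N ->
  cdot (ket2 d i) (\sum_(m <= j < n) ket2 d j) = (m <= i < n)%:R.
Proof.
move=> ltid; rewrite cdot_sumr.
rewrite (eq_bigr (fun j => if j == i then 1 else 0)) => [|j _].
  by rewrite -big_mkcond big_nat1_eq; case: ifP.
by rewrite cdot_tens !cdot_ket // eq_sym; case: (j == i); rewrite ?mulr1 ?mulr0.
Qed.

Lemma chan_out_max_ent d (U : 'M[C]_d) :
  chan_out U (max_ent R d) =
  (toC (Num.sqrt d%:R))^-1 *: \sum_(0 <= i < d) (U *m ket R d i) *t ket R d i.
Proof.
rewrite /chan_out -scalemxAr mulmx_sumr; congr (_ *: _).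
by apply: eq_bigr => i _; exact: chan_out_tens.
Qed.

Lemma sqrt_compl_inv_nat d : (1 < d)%N ->
  Num.sqrt (1 - d%:R^-1) / Num.sqrt (d - 1)%:R = (Num.sqrt d%:R)^-1 :> R.
Proof.
move=> d_gt1; have d_gt0 : (0 < d)%N by apply: ltnW.
have -> : 1 - d%:R^-1 = (d - 1)%:R * d%:R^-1 :> R.
  by rewrite natrB 1?ltnW // mulrBl mulfV ?pnatr_eq0 -?lt0n // mul1r.
rewrite sqrtrM ?ler0n // sqrtrV ?ler0n // mulrAC divff ?mul1r //.
by rewrite sqrtr_eq0 -ltNge ltr0n subn_gt0.
Qed.

Lemma opt_succ_prob_max_ent d : (2 <= d)%N ->
  opt_succ_prob (Iq R d) (Vq R d) (max_ent R d) (toC (ent_opt R d)).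
Proof.
move=> d_ge2; have d_gt0 : (0 < d)%N by apply: ltnW.
set e := ket2 d 0; set g := \sum_(1 <= i < d) ket2 d i.
set r := (Num.sqrt (d - 1)%:R)^-1 : R.
have gg : cdot g g = (d - 1)%:R.
  rewrite cdot_suml (eq_big_nat _ _ (F2 := fun => 1)) => [|i /andP[i_ge1 ltid]].
    by rewrite sumr_const_nat.
  by rewrite cdot_ket2_sum // i_ge1 ltid.
have sqrt_e : toC (Num.sqrt (d%:R^-1 : R)) = (toC (Num.sqrt (d%:R : R)))^-1.
  by rewrite sqrtrV ?ler0n // fmorphV.
have sqrt_g : toC (Num.sqrt (1 - d%:R^-1)) * toC r = (toC (Num.sqrt d%:R))^-1.
  by rewrite -rmorphM sqrt_compl_inv_nat // fmorphV.
apply: (@opt_succ_prob_superpos _ _ _ _ _ _ e (toC r *: g)).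
- by rewrite invr_ge0 ler0n invf_le1 ?ler1n ?ltr0n.
- by rewrite cdot_tens cdot_ket // mulr1.
- rewrite cdotZl cdotZr conj_toC gg mulrA -rmorphM -(rmorph_nat (@toC R)) -rmorphM.
  rewrite -expr2 exprVn sqr_sqrtr ?ler0n // mulVf ?rmorph1 //.
  by rewrite pnatr_eq0 subn_eq0 -ltnNge.
- by rewrite cdotZr cdot_ket2_sum // mulr0.
- rewrite chan_out_max_ent Iq_id; under eq_bigr do rewrite mul1mx.
  by rewrite (big_ltn d_gt0) /superpos scalerA sqrt_g sqrt_e -scalerDr.
rewrite chan_out_max_ent (big_ltn d_gt0) /superpos scalerN scalerA sqrt_g sqrt_e.
rewrite -scalerBr.
congr (_ *: (_ + _)); first by rewrite Vq_ket // scale1r.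
rewrite -sumrN; apply: eq_big_nat => i /andP[i_ge1 ltid].
by rewrite Vq_ket // -[i == 0%N]negbK -lt0n i_ge1 scaleN1r tensmxNl.
Qed.
End Qudit.

Lemma cvg_helstrom (R : realType) T (F : set_system T) (FF : Filter F) (f : T -> R) c :
  f @ F --> c -> (fun t => helstrom (f t)) @ F --> helstrom c.
Proof.
move=> cvg_f; apply: cvgM; first exact: cvg_cst.
apply: cvgD; first exact: cvg_cst.
apply: cvg_comp; last exact: sqrt_continuous.
by apply: cvgB; [exact: cvg_cst | rewrite expr2; apply: cvgM].
Qed.

Lemma cvg_ent_opt (R : realType) : (fun d : nat => ent_opt R d) @ \oo --> (2^-1 : R).
Proof.
have -> : (2^-1 : R) = helstrom 1 by rewrite /helstrom expr1n subrr sqrtr0 addr0 mulr1.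
apply: (@cvg_helstrom _ _ _ _ (fun d : nat => 1 - 2 / d%:R)).
rewrite -cvg_shiftS.
have -> : [sequence 1 - 2 / n.+1%:R]_n = (fun n => 1 - 2 * harmonic n :> R).
  by apply/funext.
have := cvgB (cvg_cst (1 : R)) (cvgM (cvg_cst (2 : R)) (@cvg_harmonic R)).
rewrite mulr0 subr0; apply.
Qed.

Theorem mainTheorem12 (R : realType) :
  (forall d : nat, (2 <= d)%N ->
     perfectly_distinguishable (Iq R d) (Vq R d)
       (plus_state R d *t (ket R 1 0 : 'cV[R[i]]_1)))
  /\ (forall d : nat, (2 <= d)%N ->
     opt_succ_prob (Iq R d) (Vq R d) (max_ent R d) (toC (ent_opt R d)))
  /\ (fun d : nat => ent_opt R d) @ \oo --> (2^-1 : R).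
Proof.
split; first exact: perfectly_distinguishable_plus.
split; first exact: opt_succ_prob_max_ent.
exact: cvg_ent_opt.
Qed.
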